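(* Let $P$ and $Q$ be two probability distributions on a finite set $\mathcal{A}$ that are positive on $\mathcal{A}$. Then $$\min_{x\in\mathcal{A}}\frac{P(x)}{Q(x)}\cdot D(Q\|P)\;\le\;\log\bigl(1+\chi^2(P,Q)\bigr)-D(P\|Q)\;\le\;\max_{x\in\mathcal{A}}\frac{P(x)}{Q(x)}\cdot D(Q\|P).$$
   Context: $D(P\|Q)=\sum_{x\in\mathcal{A}}P(x)\log\frac{P(x)}{Q(x)}$ is the relative entropy (natural logarithm), and $\chi^2(P,Q)=\sum_{x\in\mathcal{A}}\frac{(P(x)-Q(x))^2}{Q(x)}$ is the chi-squared divergence. *)

From mathcomp Require Import all_boot all_order all_algebra.
From mathcomp Require Import all_classical all_reals all_analysis.
Set Implicit Arguments. Unset Strict Implicit. Unset Printing Implicit Defensive.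
Import Order.TTheory GRing.Theory Num.Theory.
Local Open Scope ring_scope.

Definition positive_distr (R : realType) (A : finType) (P : A -> R) : Prop :=
  (forall x, 0 < P x) /\ \sum_(x : A) P x = 1.

Definition KL (R : realType) (A : finType) (P Q : A -> R) : R :=
  \sum_(x : A) P x * ln (P x / Q x).

Definition chi2 (R : realType) (A : finType) (P Q : A -> R) : R :=
  \sum_(x : A) (P x - Q x) ^+ 2 / Q x.

(* min / max over the (nonempty) finite set A of f, computed over enum A;
   on an empty type these return 0 (irrelevant: distributions force A nonempty). *)
Definition fmin (R : realType) (A : finType) (f : A -> R) : R :=
  match enum A with
  | [::] => 0
  | a :: s => foldr (fun x m => Num.min (f x) m) (f a) s
  end.
Definition fmax (R : realType) (A : finType) (f : A -> R) : R :=
  match enum A with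
  | [::] => 0
  | a :: s => foldr (fun x m => Num.max (f x) m) (f a) s
  end.

(* Write r := P/Q, so that D(P||Q) = E_Q[r ln r], D(Q||P) = -E_Q[ln r],
   E_Q[r] = 1 and E_Q[r^2] = 1 + chi^2(P,Q) =: S.  The statement becomes
   E_Q[(r - m) ln r] <= ln S <= E_Q[(r - M) ln r] for m <= r <= M.
   Both sides come from ln t <= t - 1: applied to t = r/S and weighted by
   Q (r - m) >= 0 it gives the upper bound on E_Q[(r - m) ln r]; applied to
   t = r and weighted by Q (M - r) >= 0 it gives E_Q[(r - M) ln r] >= S - 1,
   and S - 1 >= ln S. *)
From mathcomp Require Import all_boot all_order all_algebra.
From mathcomp Require Import all_classical all_reals all_analysis.
From mathcomp Require Import ring lra.
Import Order.TTheory GRing.Theory Num.Theory.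
Local Open Scope ring_scope.

Section FoldExtrema.

Context {R : realType} {T : eqType} (f : T -> R).

Lemma foldr_min_le (a : T) (s : seq T) (x : T) :
  x \in a :: s -> foldr (fun y m => Num.min (f y) m) (f a) s <= f x.
Proof.
elim: s => [|b s IH] /=; first by rewrite mem_seq1 => /eqP ->.
rewrite ge_min; case: (eqVneq x b) => [-> _|xb]; first by rewrite lexx.
by rewrite !inE (negbTE xb) /= => xin; rewrite IH ?orbT // inE.
Qed.

Lemma foldr_min_ge0 (a : T) (s : seq T) :
  (forall y, 0 <= f y) -> 0 <= foldr (fun y m => Num.min (f y) m) (f a) s.
Proof. by move=> f_ge0; elim: s => [|b s IH] //=; rewrite le_min f_ge0. Qed.

Lemma foldr_max_ge (a : T) (s : seq T) (x : T) :
  x \in a :: s -> f x <= foldr (fun y m => Num.max (f y) m) (f a) s.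
Proof.
elim: s => [|b s IH] /=; first by rewrite mem_seq1 => /eqP ->.
rewrite le_max; case: (eqVneq x b) => [-> _|xb]; first by rewrite lexx.
by rewrite !inE (negbTE xb) /= => xin; rewrite IH ?orbT // inE.
Qed.

End FoldExtrema.

Section FiniteExtrema.

Context {R : realType} {A : finType} (f : A -> R).

Lemma fmin_le x : fmin f <= f x.
Proof.
rewrite /fmin; have : x \in enum A by rewrite mem_enum.
by case: (enum A) => [//|a s]; apply: foldr_min_le.
Qed.

Lemma fmin_ge0 : (forall x, 0 <= f x) -> 0 <= fmin f.
Proof. by move=> f_ge0; rewrite /fmin; case: (enum A) => [//|a s]; apply: foldr_min_ge0. Qed.

Lemma fmax_ge x : f x <= fmax f.
Proof.
rewrite /fmax; have : x \in enum A by rewrite mem_enum.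
by case: (enum A) => [//|a s]; apply: foldr_max_ge.
Qed.

End FiniteExtrema.

Lemma ln_le_subr1 {R : realType} {x : R} : 0 < x -> ln x <= x - 1.
Proof. by move=> x_gt0; have := @le_ln1Dx R (x - 1); rewrite [1 + _]addrC subrK; apply; lra. Qed.

Section RatioMoments.

Context {R : realType} {A : finType} {Q r : A -> R}.
Hypothesis Q_ge0 : forall x, 0 <= Q x.
Hypothesis Q_sum1 : \sum_x Q x = 1.
Hypothesis r_gt0 : forall x, 0 < r x.
Hypothesis Qr_sum1 : \sum_x Q x * r x = 1.

Let S := \sum_x Q x * r x ^+ 2.

Lemma sum_mul_quadratic (a b c : R) :
  \sum_x Q x * (a * r x ^+ 2 + b * r x + c) = a * S + b + c.
Proof.
transitivity (a * S + b * \sum_x Q x * r x + c * \sum_x Q x); last first.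
  by rewrite Qr_sum1 Q_sum1 !mulr1.
rewrite /S !mulr_sumr -!big_split /=; apply: eq_bigr => x _; ring.
Qed.

Lemma second_moment_subr1 : S - 1 = \sum_x Q x * (r x - 1) ^+ 2.
Proof.
have -> : \sum_x Q x * (r x - 1) ^+ 2 = \sum_x Q x * (1 * r x ^+ 2 + (-2) * r x + 1).
  by apply: eq_bigr => x _; ring.
by rewrite sum_mul_quadratic; ring.
Qed.

Lemma second_moment_ge1 : 1 <= S.
Proof.
rewrite -subr_ge0 second_moment_subr1.
by apply: sumr_ge0 => x _; rewrite mulr_ge0 ?sqr_ge0.
Qed.

Lemma sum_mul_sub_ln (c : R) :
  \sum_x Q x * (r x - c) * ln (r x) =
  \sum_x Q x * r x * ln (r x) - c * \sum_x Q x * ln (r x).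
Proof. by rewrite mulr_sumr -sumrB; apply: eq_bigr => x _; ring. Qed.

Lemma sum_mul_sub_ln_le (m : R) :
  0 <= m -> (forall x, m <= r x) ->
  \sum_x Q x * (r x - m) * ln (r x) <= ln S.
Proof.
move=> m_ge0 m_le_r; have S_gt0 : 0 < S by have := second_moment_ge1; lra.
have ln_r_le x : ln (r x) <= ln S + r x / S - 1.
  have := ln_le_subr1 (divr_gt0 (r_gt0 x) S_gt0).
  by rewrite lnM ?lnV ?posrE ?invr_gt0 //; lra.
have ln_S_ge : 1 - S^-1 <= ln S.
  have := @ln_le_subr1 _ S^-1; rewrite invr_gt0 lnV ?posrE // => /(_ S_gt0); lra.
apply: le_trans (_ : \sum_x Q x * (r x - m) * (ln S + r x / S - 1) <= _).
  by apply: ler_sum => x _; rewrite ler_wpM2l ?mulr_ge0 ?subr_ge0 ?ln_r_le.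
rewrite (eq_bigr (fun x => Q x *
    (S^-1 * r x ^+ 2 + (ln S - 1 - m / S) * r x + - m * (ln S - 1)))); last first.
  by move=> x _; field; rewrite gt_eqF.
by rewrite sum_mul_quadratic mulVf ?gt_eqF //; nra.
Qed.

Lemma sum_mul_sub_ln_ge (M : R) :
  (forall x, r x <= M) -> ln S <= \sum_x Q x * (r x - M) * ln (r x).
Proof.
move=> r_le_M; have ln_S_le : ln S <= S - 1.
  by apply: ln_le_subr1; have := second_moment_ge1; lra.
apply: le_trans ln_S_le _.
have -> : S - 1 = \sum_x Q x * (r x - M) * (r x - 1).
  rewrite (eq_bigr (fun x => Q x * (1 * r x ^+ 2 + - (M + 1) * r x + M))).
    by rewrite sum_mul_quadratic; lra.
  by move=> x _; ring.
apply: ler_sum => x _; rewrite -subr_ge0 -mulrBr.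
have -> : Q x * (r x - M) * (ln (r x) - (r x - 1)) =
    Q x * (M - r x) * (r x - 1 - ln (r x)) by ring.
by rewrite !mulr_ge0 ?subr_ge0 ?ln_le_subr1.
Qed.

End RatioMoments.

Theorem corollary1 (R : realType) (A : finType) (P Q : A -> R) :
  positive_distr P -> positive_distr Q ->
  fmin (fun x => P x / Q x) * KL Q P <= ln (1 + chi2 P Q) - KL P Q /\
  ln (1 + chi2 P Q) - KL P Q <= fmax (fun x => P x / Q x) * KL Q P.
Proof.
move=> [P_gt0 P_sum1] [Q_gt0 Q_sum1].
set r := fun x => P x / Q x.
have r_gt0 x : 0 < r x by rewrite divr_gt0.
have P_eq x : P x = Q x * r x by rewrite /r mulrC divfK // gt_eqF.
have Q_ge0 x : 0 <= Q x := ltW (Q_gt0 x).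
have Qr_sum1 : \sum_x Q x * r x = 1 by rewrite -P_sum1; apply: eq_bigr => x _.
have chi2_eq : 1 + chi2 P Q = \sum_x Q x * r x ^+ 2.
  apply/eqP; rewrite addrC eq_sym -subr_eq (second_moment_subr1 Q_sum1 Qr_sum1).
  by apply/eqP/eq_bigr => x _; rewrite P_eq; field; rewrite gt_eqF.
have KL_PQ : KL P Q = \sum_x Q x * r x * ln (r x).
  by apply: eq_bigr => x _; rewrite {1}P_eq.
have KL_QP : KL Q P = - \sum_x Q x * ln (r x).
  rewrite /KL -sumrN; apply: eq_bigr => x _.
  by rewrite -invf_div lnV ?posrE ?divr_gt0 // mulrN.
rewrite chi2_eq KL_PQ KL_QP !mulrN; split.
- have r_ge0 x : 0 <= r x := ltW (r_gt0 x).
  have := sum_mul_sub_ln_le Q_ge0 Q_sum1 r_gt0 Qr_sum1 _ (fmin_ge0 r r_ge0) (fmin_le r).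
  rewrite sum_mul_sub_ln; lra.
- have := sum_mul_sub_ln_ge Q_ge0 Q_sum1 r_gt0 Qr_sum1 _ (fmax_ge r).
  rewrite sum_mul_sub_ln; lra.
Qed.
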